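(* There exist absolute constants $c>0$ and $n_0$ with the following property. For any integer $B\ge1$, any $\eta\in(0,1/2)$, any $\epsilon\in(0,1)$ and any $n\ge n_0$, there exist a sequence of $n\times n$ matrices $(A(k))_{k\ge0}$, a positive integer $Q$ (depending on $n$), and an initial vector $x(0)\in\mathbb{R}^n$ whose components are multiples of $1/Q$, such that: each $A(k)$ is doubly stochastic with positive diagonal entries and all positive entries at least $\eta$; for every integer $k\ge0$ the directed graph $(N,\mathcal{E}(A(kB))\cup\cdots\cup\mathcal{E}(A((k+1)B-1)))$ is strongly connected; and under the dynamics $x_i(k+1)=\lfloor\sum_j a_{ij}(k)x_j(k)\rfloor$ (rounding down to the nearest multiple of $1/Q$), whenever $\underline{V}(x(k))/\underline{V}(x(0))\le\epsilon$ we have \[k\ge c\,\frac{n^2}{\eta}\,B\log\frac1\epsilon.\]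
   Context: $N=\{1,\dots,n\}$. A matrix is doubly stochastic if it is nonnegative with all row and column sums equal to $1$. For a matrix $A=[a_{ij}]$, $\mathcal{E}(A)$ is the set of directed edges $(j,i)$ (including self-edges) with $a_{ij}>0$. For $x\in\mathbb{R}^n$, $m(x)=\min_ix_i$ and $\underline{V}(x)=\sum_i(x_i-m(x))^2$. *)

From HB Require Import structures.
From mathcomp Require Import all_boot all_order all_algebra.
From mathcomp Require Import all_classical all_reals all_analysis.
Set Implicit Arguments. Unset Strict Implicit. Unset Printing Implicit Defensive.
Import Order.TTheory GRing.Theory Num.Theory.
Local Open Scope ring_scope.

Section Defs.
Variable R : realType.

Definition doubly_stochastic n (A : 'M[R]_n) : Prop :=
  (forall i j, 0 <= A i j) /\
  (forall i, \sum_(j < n) A i j = 1) /\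
  (forall j, \sum_(i < n) A i j = 1).

(* edge relation of the union E(A(s)) u ... u E(A(s+len-1)):
   directed edge (j,i) present iff a_ij(t) > 0 for some t in the window *)
Definition union_edges n (A : nat -> 'M[R]_n) (s len : nat) : rel 'I_n :=
  fun j i => [exists t : 'I_len, 0 < A (s + t)%N i j].

Definition strongly_connected n (e : rel 'I_n) : Prop :=
  forall i j : 'I_n, connect e i j.

(* m(x) = min_i x_i  (0 by convention for the empty vector) *)
Definition vmin n : ('I_n -> R) -> R :=
  match n return ('I_n -> R) -> R with
  | 0 => fun _ => 0
  | n'.+1 => fun x => \big[Num.min/x ord0]_(i < n'.+1) x i
  end.

Definition Vlow n (x : 'I_n -> R) : R := \sum_(i < n) (x i - vmin x) ^+ 2.

Definition round_down (Q : nat) (y : R) : R := (Num.floor (Q%:R * y))%:~R / Q%:R.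

Fixpoint qtraj n (Q : nat) (A : nat -> 'M[R]_n) (x0 : 'I_n -> R) (k : nat)
  : 'I_n -> R :=
  match k with
  | 0 => x0
  | k'.+1 => fun i => round_down Q (\sum_(j < n) A k' i j * qtraj Q A x0 k' j)
  end.

End Defs.

From HB Require Import structures.
From mathcomp Require Import all_boot all_order all_algebra.
From mathcomp Require Import all_classical all_reals all_analysis.
From mathcomp Require Import ring lra zify.
Import Order.TTheory GRing.Theory Num.Theory.
Import numFieldNormedType.Exports.
Set Implicit Arguments. Unset Strict Implicit. Unset Printing Implicit Defensive.
Local Open Scope ring_scope.

(* The extremal example is a ring of n nodes. Time is cut into windows of B steps; all
   matrices are the identity except at the last step of each window, where every node
   moves a fraction eta toward its successor (odd windows) or its predecessor (even
   windows). Two consecutive windows act on the cosine mode u_i = cos (2 pi i / n) as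
   multiplication by lam = 1 - 2 eta (1 - eta) (1 - cos (2 pi / n)) >= 1 - 128 eta / n^2,
   so without rounding V decays at most by lam^2 every 2B steps. Start from u rounded to
   the grid: each step moves every coordinate by less than 1/Q away from the linear
   trajectory, and rounding an average of grid points never increases V. Taking Q of
   order n T / (sqrt eps - eps) makes the rounding errors negligible up to the time
   T ~ n^2 B log (1 / eps) / eta. *)

Lemma ord_gt0 n (i : 'I_n) : (0 < n)%N.
Proof. exact: leq_ltn_trans (leq0n i) (ltn_ord i). Qed.

Section RealInequalities.
Variable R : realFieldType.

Lemma sqr_perturb_bounds (a b d D : R) : 0 <= a <= D -> 0 <= b -> 0 <= d ->
  a - d <= b <= a + d -> a ^+ 2 - 2 * D * d <= b ^+ 2 <= a ^+ 2 + 2 * D * d + d ^+ 2.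
Proof.
move=> /andP[a0 aD] b0 d0 /andP[lb ub]; apply/andP; split; last first.
  have : 0 <= (a + d - b) * (a + d + b) by apply: mulr_ge0; lra.
  have : 0 <= (D - a) * d by apply: mulr_ge0; lra.
  nra.
have : 0 <= (D - a) * d by apply: mulr_ge0; lra.
have [da|ad] := leP d a.
  have : 0 <= (b - (a - d)) * (b + (a - d)) by apply: mulr_ge0; lra.
  nra.
have : 0 <= (d - a) * a by apply: mulr_ge0; lra.
have : 0 <= b * b by apply: mulr_ge0.
nra.
Qed.

Lemma sqr_convex (w a b : R) : 0 <= w <= 1 ->
  ((1 - w) * a + w * b) ^+ 2 <= (1 - w) * a ^+ 2 + w * b ^+ 2.
Proof.
move=> /andP[w0 w1].
have : 0 <= w * (1 - w) * (a - b) ^+ 2.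
  by apply: mulr_ge0; [apply: mulr_ge0; lra | exact: sqr_ge0].
suff -> : (1 - w) * a ^+ 2 + w * b ^+ 2 =
  ((1 - w) * a + w * b) ^+ 2 + w * (1 - w) * (a - b) ^+ 2 by lra.
by ring.
Qed.

End RealInequalities.

Section Vlow.
Variables (R : realType) (n : nat).
Implicit Types (x y : 'I_n -> R).

Lemma vmin_le x i : vmin x <= x i.
Proof. by case: n x i => [|m] x i; [case: i | exact: bigmin_le]. Qed.

Lemma vmin_attained x : (0 < n)%N -> exists p, vmin x = x p.
Proof.
case: n x => [|m] x // _ /=.
elim/big_ind: _ => [|a b [p ->] [q ->]|i _]; first by exists ord0.
- by rewrite /Num.min; case: ifP => _; [exists p|exists q].
- by exists i.
Qed.

Lemma vminZ x (s : R) : (0 < n)%N -> 0 <= s -> vmin (fun i => s * x i) = s * vmin x.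
Proof.
move=> n0 s0; have [p xp] := vmin_attained x n0.
have [q sxq] := vmin_attained (fun i => s * x i) n0.
apply/le_anti/andP; split; last by rewrite sxq ler_wpM2l // vmin_le.
by rewrite xp (vmin_le (fun i => s * x i)).
Qed.

Lemma VlowZ x (s : R) : (0 < n)%N -> 0 <= s -> Vlow (fun i => s * x i) = s ^+ 2 * Vlow x.
Proof.
move=> n0 s0; rewrite /Vlow vminZ // mulr_sumr.
by apply: eq_bigr => i _; ring.
Qed.

Lemma sub_vmin_le2 y : (forall i, -1 <= y i <= 1) -> forall i, y i - vmin y <= 2.
Proof.
move=> y1 i; have [p ->] := vmin_attained y (ord_gt0 i).
by move: (y1 i) (y1 p) => /andP[? ?] /andP[? ?]; lra.
Qed.

Lemma Vlow_sandwich x y (d D : R) : (0 < n)%N -> 0 <= d ->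
    (forall i, y i - d <= x i <= y i) -> (forall i, y i - vmin y <= D) ->
  Vlow y - n%:R * (2 * D * d) <= Vlow x <= Vlow y + n%:R * (2 * D * d + d ^+ 2).
Proof.
move=> n0 d0 xy yD.
have [q yq] := vmin_attained y n0; have [p xp] := vmin_attained x n0.
have mxy : vmin x <= vmin y.
  by rewrite yq; have := vmin_le x q; case/andP: (xy q) => _ hi; lra.
have myx : vmin y - d <= vmin x.
  by rewrite xp; have := vmin_le y p; case/andP: (xy p) => lo _; lra.
have bounds i : (y i - vmin y) ^+ 2 - 2 * D * d <= (x i - vmin x) ^+ 2
    <= (y i - vmin y) ^+ 2 + 2 * D * d + d ^+ 2.
  apply: sqr_perturb_bounds => //; rewrite ?subr_ge0 ?vmin_le ?yD //.
  by case/andP: (xy i) => lo hi; apply/andP; split; lra.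
have sum_const c : n%:R * c = \sum_(i < n) c by rewrite sumr_const card_ord mulr_natl.
rewrite /Vlow !sum_const -sumrB -big_split /=.
by apply/andP; split; apply: ler_sum => i _; case/andP: (bounds i) => lo hi; lra.
Qed.

End Vlow.

Section Quantization.
Variables (R : realType) (Q : nat).
Hypothesis Q_gt0 : (0 < Q)%N.

Let Q_gt0R : 0 < Q%:R :> R. Proof. by rewrite ltr0n. Qed.

Definition on_grid n (x : 'I_n -> R) := forall i, exists z : int, x i = z%:~R / Q%:R.

Lemma round_down_le (y : R) : round_down Q y <= y.
Proof. by rewrite /round_down ler_pdivrMr // mulrC floor_le. Qed.

Lemma round_down_gt (y : R) : y - 1 / Q%:R < round_down Q y.
Proof.
rewrite /round_down ltr_pdivlMr // mulrBl mul1r mulVf ?gt_eqF //.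
by have := floorD1_gt (Q%:R * y); rewrite intrD mulrC; lra.
Qed.

Lemma ler_round_down (y y' : R) : y <= y' -> round_down Q y <= round_down Q y'.
Proof.
by move=> yy'; rewrite /round_down ler_pM2r ?invr_gt0 // ler_int le_floor // ler_pM2l.
Qed.

Lemma round_down_intK (z : int) : round_down Q (z%:~R / Q%:R : R) = z%:~R / Q%:R.
Proof. by rewrite /round_down mulrCA mulfV ?gt_eqF // mulr1 intrKfloor. Qed.

Lemma qtraj_on_grid n (A : nat -> 'M[R]_n) x0 :
  on_grid x0 -> forall k, on_grid (qtraj Q A x0 k).
Proof. by move=> x0g [|k] i; [exact: x0g | eexists]. Qed.

(* min x is a grid point, so rounding keeps the averaged vector above it; then use
   convexity of the square. *)
Lemma Vlow_round_avg_le n (x : 'I_n -> R) (w : R) (f : 'I_n -> 'I_n) :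
  (0 < n)%N -> 0 <= w <= 1 -> injective f -> on_grid x ->
  Vlow (fun i => round_down Q ((1 - w) * x i + w * x (f i))) <= Vlow x.
Proof.
move=> n0 w01 f_inj xg; set x' := fun i => _.
have [p mp] := vmin_attained x n0; set m := vmin x in mp *.
have m_le i : m <= x' i.
  have [z xz] := xg p.
  have -> : m = round_down Q m by rewrite mp xz round_down_intK.
  apply: ler_round_down.
  by have := vmin_le x i; have := vmin_le x (f i); rewrite -/m; nra.
have [q mq'] := vmin_attained x' n0.
rewrite /Vlow; apply: (@le_trans _ _
  (\sum_i ((1 - w) * (x i - m) ^+ 2 + w * (x (f i) - m) ^+ 2))).
  apply: ler_sum => i _; apply: le_trans (sqr_convex _ _ w01).
  have avg_ge_m : m <= (1 - w) * x i + w * x (f i).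
    exact: le_trans (m_le i) (round_down_le _).
  have -> : (1 - w) * (x i - m) + w * (x (f i) - m) = (1 - w) * x i + w * x (f i) - m.
    by ring.
  rewrite lerXn2r ?nnegrE ?subr_ge0 ?vmin_le // mq'.
  by have : x' i <= (1 - w) * x i + w * x (f i) := round_down_le _; have := m_le q; lra.
rewrite big_split /= -!mulr_sumr.
have -> : \sum_i (x (f i) - m) ^+ 2 = \sum_i (x i - m) ^+ 2.
  by rewrite [RHS](reindex_inj f_inj).
by rewrite -mulrDl subrK mul1r.
Qed.

Fixpoint ltraj n (A : nat -> 'M[R]_n) (u : 'I_n -> R) (k : nat) : 'I_n -> R :=
  match k with
  | 0 => u
  | k'.+1 => fun i => \sum_(j < n) A k' i j * ltraj A u k' j
  end.

(* Each step loses less than 1/Q to rounding, and averaging by a row-stochastic matrix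
   does not amplify earlier losses. *)
Lemma qtraj_round_sandwich n (A : nat -> 'M[R]_n) (u : 'I_n -> R) :
    (forall k i j, 0 <= A k i j) -> (forall k i, \sum_j A k i j = 1) ->
  forall k i, ltraj A u k i - k.+1%:R / Q%:R
              <= qtraj Q A (fun i => round_down Q (u i)) k i <= ltraj A u k i.
Proof.
move=> A_ge0 A_row; elim=> [|k IH] i /=.
  by rewrite round_down_le andbT ltW // -[1%:R]/1 round_down_gt.
set x := qtraj _ _ _ k; set y := ltraj A u k.
apply/andP; split; last first.
  apply: le_trans (round_down_le _) _; apply: ler_sum => j _.
  by apply: ler_wpM2l => //; case/andP: (IH j).
apply: ltW; apply: le_lt_trans (round_down_gt _).
have shift : \sum_j A k i j * (y j - k.+1%:R / Q%:R) = \sum_j A k i j * y j - k.+1%:R / Q%:R.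
  by under eq_bigr do rewrite mulrBr; rewrite sumrB -mulr_suml A_row mul1r.
have : \sum_j A k i j * (y j - k.+1%:R / Q%:R) <= \sum_j A k i j * x j.
  by apply: ler_sum => j _; apply: ler_wpM2l => //; case/andP: (IH j).
by rewrite shift -[k.+2]addn1 natrD mulrDl; lra.
Qed.

End Quantization.

Section AveragingMatrix.
Variables (R : realType) (n : nat).

Definition avg_mx (w : R) (f : 'I_n -> 'I_n) : 'M[R]_n :=
  \matrix_(i, j) ((1 - w) * (i == j)%:R + w * (f i == j)%:R).

Lemma sum_delta_mul (a : 'I_n) (v : 'I_n -> R) : \sum_j ((a == j)%:R * v j) = v a.
Proof.
rewrite (bigD1 a) //= eqxx mul1r big1 ?addr0 // => j ja.
by rewrite eq_sym (negbTE ja) mul0r.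
Qed.

Lemma avg_mx_apply w f (v : 'I_n -> R) i :
  \sum_j (avg_mx w f i j * v j) = (1 - w) * v i + w * v (f i).
Proof.
under eq_bigr do rewrite mxE mulrDl -!mulrA.
by rewrite big_split /= -!mulr_sumr !sum_delta_mul.
Qed.

Lemma avg_mx_ds w f : injective f -> 0 <= w <= 1 -> doubly_stochastic (avg_mx w f).
Proof.
move=> f_inj /andP[w0 w1]; split; [|split].
- by move=> i j; rewrite mxE addr_ge0 // mulr_ge0 //; lra.
- move=> i; have := avg_mx_apply w f (fun _ => 1) i.
  by under eq_bigr do rewrite mulr1; move=> ->; ring.
- move=> j; under eq_bigr do rewrite mxE.
  have col (g : 'I_n -> 'I_n) : injective g -> \sum_i ((g i == j)%:R : R) = 1.
    move=> g_inj; transitivity (\sum_i ((i == j)%:R : R)).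
      by rewrite [RHS](reindex_inj g_inj).
    by rewrite -[RHS](sum_delta_mul j (fun _ => 1)); apply: eq_bigr => i _; rewrite mulr1 eq_sym.
  by rewrite big_split /= -!mulr_sumr (col id) // (col f) //; ring.
Qed.

Lemma avg_mx_diag_gt0 w f i : 0 <= w < 1 -> 0 < avg_mx w f i i.
Proof.
move=> /andP[w0 w1]; rewrite mxE eqxx /= mulr1.
have : 0 <= w * (f i == i)%:R by rewrite mulr_ge0.
lra.
Qed.

Lemma avg_mx_gt0_ge w f (eta : R) i j : eta <= 1 / 2 -> (w = 0 \/ eta <= w <= 1 - eta) ->
  0 < avg_mx w f i j -> eta <= avg_mx w f i j.
Proof.
move=> eta_half w_cases; rewrite mxE.
by case: (i == j); case: (f i == j); rewrite ?mulr1 ?mulr0 ?addr0 ?add0r;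
  case: w_cases => [?|/andP[? ?]]; lra.
Qed.

End AveragingMatrix.

Section CycleConnectivity.
Variable n : nat.

Lemma iter_ordS_val (i : 'I_n) d : val (iter d (@ordS n) i) = ((i + d) %% n)%N.
Proof.
have n0 := ord_gt0 i.
elim: d => [|d IH] /=; first by rewrite addn0 modn_small.
by rewrite IH -addn1 modnDml -addnA addn1 addnS.
Qed.

Lemma iter_ordS_onto (i j : 'I_n) : exists d, iter d (@ordS n) i = j.
Proof.
have n0 := ord_gt0 i.
exists (j + (n - i))%N; apply: val_inj; rewrite iter_ordS_val /=.
by rewrite addnCA subnKC ?(ltnW (ltn_ord i)) // modnDr modn_small.
Qed.

Lemma ordS_connected (e : rel 'I_n) : (forall v, e v (ordS v)) -> strongly_connected e.
Proof.
move=> e_ordS i j; have [d <-] := iter_ordS_onto i j.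
elim: d => [|d IH] /=; first exact: connect0.
exact: connect_trans IH (connect1 (e_ordS _)).
Qed.

Lemma ord_pred_connected (e : rel 'I_n) : (forall v, e v (ord_pred v)) -> strongly_connected e.
Proof.
move=> e_pred i j; have [d <-] := iter_ordS_onto j i.
elim: d => [|d IH] /=; first exact: connect0.
apply: connect_trans _ IH; apply: connect1.
by have := e_pred (ordS (iter d (@ordS n) j)); rewrite ordSK.
Qed.

End CycleConnectivity.

Section RingConstruction.
Variables (R : realType) (n B : nat) (w : R).

Definition cyc_step (m : nat) : 'I_n -> 'I_n := if odd m then @ordS n else @ord_pred n.

Definition window_weight (k : nat) : R := if (k %% B == B.-1)%N then w else 0.

Definition ring_mx (k : nat) : 'M[R]_n := avg_mx (window_weight k) (cyc_step (k %/ B)).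

Lemma cyc_step_inj m : injective (cyc_step m).
Proof. by rewrite /cyc_step; case: odd; [exact: ordS_inj | exact: ord_pred_inj]. Qed.

Lemma window_weight_cases k : window_weight k = 0 \/ window_weight k = w.
Proof. by rewrite /window_weight; case: ifP; [right | left]. Qed.

Lemma ring_mx_ds k : 0 <= w <= 1 -> doubly_stochastic (ring_mx k).
Proof.
move=> w01; apply: avg_mx_ds; first exact: cyc_step_inj.
by case: (window_weight_cases k) => ->; lra.
Qed.

Lemma ring_mx_diag_gt0 k i : 0 <= w < 1 -> 0 < ring_mx k i i.
Proof. by move=> w01; apply: avg_mx_diag_gt0; case: (window_weight_cases k) => ->; lra. Qed.

Lemma ring_mx_gt0_ge k i j : 0 <= w <= 1 / 2 -> 0 < ring_mx k i j -> w <= ring_mx k i j.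
Proof.
move=> /andP[w0 w_half]; apply: avg_mx_gt0_ge => //.
by case: (window_weight_cases k) => ->; [left | right; lra].
Qed.

Lemma ring_mx_idle_apply m r (v : 'I_n -> R) i :
  (r.+1 < B)%N -> \sum_j ring_mx (m * B + r) i j * v j = v i.
Proof.
move=> rB; rewrite /ring_mx avg_mx_apply /window_weight modnMDl modn_small ?(ltnW rB) //.
have -> : (r == B.-1) = false by apply/negbTE; rewrite neq_ltn -ltnS prednK ?rB //; lia.
by rewrite subr0 mul1r mul0r addr0.
Qed.

Lemma ring_mx_last m : (0 < B)%N -> ring_mx (m * B + B.-1) = avg_mx w (cyc_step m).
Proof.
move=> B0; have lastB : (B.-1 < B)%N by rewrite prednK.
by rewrite /ring_mx /window_weight modnMDl modn_small // eqxx divnMDl // divn_small ?addn0.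
Qed.

Lemma ring_mx_connected k : (0 < B)%N -> 0 < w <= 1 ->
  strongly_connected (union_edges ring_mx (k * B) B).
Proof.
move=> B0 /andP[w0 w1]; have lastB : (B.-1 < B)%N by rewrite prednK.
have edge i : 0 < ring_mx (k * B + Ordinal lastB) i (cyc_step k i).
  rewrite /= ring_mx_last // mxE eqxx /= mulr1.
  have : 0 <= (1 - w) * (i == cyc_step k i)%:R by rewrite mulr_ge0 //; lra.
  lra.
move: edge; rewrite /cyc_step; case: odd => edge.
- apply: ord_pred_connected => v; apply/existsP; exists (Ordinal lastB).
  by have := edge (ord_pred v); rewrite ord_predK.
- apply: ordS_connected => v; apply/existsP; exists (Ordinal lastB).
  by have := edge (ordS v); rewrite ordSK.
Qed.

End RingConstruction.

Section CosineMode.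
Variables (R : realType) (n : nat).

Definition theta : R := pi *+ 2 / n%:R.

Definition ucos (i : 'I_n) : R := cos (theta * i%:R).

Lemma ucos_bound i : -1 <= ucos i <= 1.
Proof. by rewrite /ucos cos_geN1 cos_le1. Qed.

Lemma theta_ge0 : 0 <= theta.
Proof. by rewrite divr_ge0 // mulrn_wge0 // pi_ge0. Qed.

Lemma cos_theta_modn m : (0 < n)%N -> cos (theta * (m %% n)%:R) = cos (theta * m%:R).
Proof.
move=> n0; rewrite [in RHS](divn_eq m n) natrD natrM mulrDr.
have -> : theta * ((m %/ n)%:R * n%:R) = (pi *+ 2) *+ (m %/ n).
  by rewrite mulrCA divfK ?pnatr_eq0 -?lt0n // mulr_natl.
by rewrite addrC (periodicn (@cosD2pi R)).
Qed.

Lemma ucos_ordS i : ucos (ordS i) = cos (theta * i%:R + theta).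
Proof.
rewrite /ucos /= cos_theta_modn ?(ord_gt0 i) //.
by rewrite -addn1 natrD mulrDr mulr1.
Qed.

Lemma ucos_ord_pred i : ucos (ord_pred i) = cos (theta * i%:R - theta).
Proof.
have n0 := ord_gt0 i.
rewrite /ucos /= cos_theta_modn // -subn1 natrB ?addn_gt0 ?n0 ?orbT // natrD.
rewrite mulrBr mulrDr mulr1 divfK ?pnatr_eq0 -?lt0n // addrAC.
by rewrite (periodicn (@cosD2pi R) 1).
Qed.

Lemma ucos_ordS_add_ord_pred i : ucos (ordS i) + ucos (ord_pred i) = 2 * cos theta * ucos i.
Proof. by rewrite ucos_ordS ucos_ord_pred cosD cosB /ucos; ring. Qed.

End CosineMode.

Section RingLinearDynamics.
Variables (R : realType) (n B : nat) (w : R).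
Hypothesis B_gt0 : (0 < B)%N.
Local Notation A := (ring_mx n B w).

Definition lam : R := (1 - w) ^+ 2 + w ^+ 2 + 2 * w * (1 - w) * cos (theta R n).

Lemma ltraj_window_idle (u : 'I_n -> R) m r : (r < B)%N ->
  ltraj A u (m * B + r) = ltraj A u (m * B).
Proof.
elim: r => [|r IH] rB; first by rewrite addn0.
rewrite addnS /= -IH ?(ltnW rB) //.
by apply: funext => i; rewrite ring_mx_idle_apply.
Qed.

Lemma ltraj_window_step (u : 'I_n -> R) m i :
  ltraj A u (m.+1 * B) i
  = (1 - w) * ltraj A u (m * B) i + w * ltraj A u (m * B) (cyc_step m i).
Proof.
have -> : (m.+1 * B = (m * B + B.-1).+1)%N by rewrite mulSn addnC -addnS prednK.
by rewrite /= ltraj_window_idle ?prednK // ring_mx_last // avg_mx_apply.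
Qed.

(* Two consecutive windows average toward the predecessor and then toward the
   successor; together they act on the cosine mode as multiplication by lam. *)
Lemma ltraj_ucos j : ltraj A (@ucos R n) (2 * j * B) = fun i => lam ^+ j * ucos R i.
Proof.
elim: j => [|j IH]; first by apply: funext => i; rewrite expr0 mul1r.
apply: funext => i.
have -> : (2 * j.+1 = (2 * j).+2)%N by rewrite mulnS.
have odd2j : odd (2 * j) = false by rewrite oddM.
rewrite !ltraj_window_step IH /cyc_step /= odd2j /= ordSK exprS.
have nbrs := ucos_ordS_add_ord_pred R i.
have -> : ucos R (ord_pred i) = 2 * cos (theta R n) * ucos R i - ucos R (ordS i) by lra.
by rewrite /lam; ring.
Qed.

End RingLinearDynamics.

Section CosineEstimates.
Variable R : realType.

Lemma sin_le_id (x : R) : 0 <= x -> sin x <= x.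
Proof.
move=> x0; have [c _ mvt] : exists2 c, c \in `[0, x] & sin x - sin 0 = cos c * (x - 0).
  apply: (MVT_segment x0 (fun c _ => is_derive_sin c)).
  by apply: continuous_subspaceT => t; exact: continuous_sin.
by move: mvt; rewrite sin0 !subr0 => ->; have := cos_le1 c; nra.
Qed.

Lemma one_sub_cos_le_sqr (x : R) : 0 <= x -> 1 - cos x <= x ^+ 2.
Proof.
move=> x0; have [c c0x mvt] : exists2 c, c \in `[0, x] & cos x - cos 0 = - sin c * (x - 0).
  apply: (MVT_segment x0 (fun c _ => is_derive_cos c)).
  by apply: continuous_subspaceT => t; exact: continuous_cos.
move: c0x mvt; rewrite in_itv /= cos0 subr0 => /andP[c0 cx] mvt.
by have := sin_le_id c0; have := sin_geN1 c; nra.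
Qed.

End CosineEstimates.

Section ModeEstimates.
Variables (R : realType) (n : nat).

Lemma theta_sqr_le : (0 < n)%N -> theta R n ^+ 2 <= 64 / n%:R ^+ 2.
Proof.
move=> n0; rewrite /theta expr_div_n ler_pM2r ?invr_gt0 ?exprn_gt0 ?ltr0n //.
have : pi < 4 :> R by have := @pihalf_lt2 R; lra.
by have := @pi_ge0 R; rewrite mulr2n; nra.
Qed.

Lemma lam_ge0_le1 (w : R) : 0 <= w <= 1 -> 0 <= lam n w <= 1.
Proof.
move=> /andP[w0 w1]; have cN1 := cos_geN1 (theta R n); have c1 := cos_le1 (theta R n).
set c := cos (theta R n) in cN1 c1 *.
have ww : 0 <= w * (1 - w) by apply: mulr_ge0; lra.
have lo : 0 <= w * (1 - w) * (1 + c) by apply: mulr_ge0; lra.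
have hi : 0 <= w * (1 - w) * (1 - c) by apply: mulr_ge0; lra.
have e1 : lam n w = (1 - 2 * w) ^+ 2 + 2 * (w * (1 - w) * (1 + c)) by rewrite /lam -/c; ring.
have e2 : lam n w = 1 - 2 * (w * (1 - w) * (1 - c)) by rewrite /lam -/c; ring.
by have := sqr_ge0 (1 - 2 * w); lra.
Qed.

Lemma lam_ge (w : R) : (0 < n)%N -> 0 <= w <= 1 -> 1 - 128 * w / n%:R ^+ 2 <= lam n w.
Proof.
move=> n0 /andP[w0 w1]; have := one_sub_cos_le_sqr (theta_ge0 R n).
have := theta_sqr_le n0; have := cos_le1 (theta R n).
have -> : 128 * w / n%:R ^+ 2 = 2 * w * (64 / n%:R ^+ 2) by rewrite !mulrA; congr (_ / _); ring.
have : 0 <= w * (1 - w) by apply: mulr_ge0; lra.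
by rewrite /lam; set c := cos _; set t := theta R n; set b := 64 / _; nra.
Qed.

Lemma expR_le_lam_pow (w : R) m : (16 <= n)%N -> 0 <= w <= 1 ->
  expR (- (256 * w / n%:R ^+ 2 * m%:R)) <= lam n w ^+ m.
Proof.
move=> n16 w01; have n0 : (0 < n)%N by apply: leq_trans n16.
set a := 128 * w / n%:R ^+ 2.
have a_ge0 : 0 <= a by rewrite divr_ge0 ?exprn_ge0 //; lra.
have a_half : a <= 1 / 2.
  have : 16 <= n%:R :> R by rewrite (ler_nat R 16 n).
  by rewrite /a ler_pdivrMr ?exprn_gt0 ?ltr0n //; nra.
have exp_le : expR (- (2 * a)) <= 1 - a.
  rewrite expRN -[X in X <= _]mul1r ler_pdivrMr ?expR_gt0 //.
  by apply: le_trans (ler_wpM2l _ (expR_ge1Dx _)); nra.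
have -> : 256 * w / n%:R ^+ 2 = 2 * a by rewrite /a !mulrA; congr (_ / _); ring.
rewrite -mulNr mulrC expRM_natl; apply: lerXn2r; rewrite ?nnegrE ?expR_ge0 //.
  by have := lam_ge0_le1 w01; lra.
exact: le_trans exp_le (lam_ge n0 w01).
Qed.

Lemma Vlow_ucos_ge1 : (2 <= n)%N -> 1 <= Vlow (@ucos R n).
Proof.
move=> n2; have n0 : (0 < n)%N by apply: leq_trans n2.
have half_lt : (n./2 < n)%N by rewrite -divn2 ltn_Pdiv.
have ucos_half : ucos R (Ordinal half_lt) <= 0.
  rewrite /ucos /=; set a := _ * _.
  have n0R : 0 < n%:R :> R by rewrite ltr0n.
  have a_n : a * n%:R = pi * 2 * (n./2)%:R.
    by rewrite /a mulrAC /theta divfK ?pnatr_eq0 -?lt0n // mulr2n; ring.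
  have : 2 * (n./2)%:R <= n%:R :> R /\ n%:R <= 4 * (n./2)%:R :> R.
    rewrite -!natrM !ler_nat; have := odd_double_half n; rewrite -mul2n.
    by case: (odd n) => /= e; split; lia.
  move=> [half_le half_ge]; have := @pi_gt0 R => pi0.
  have a_le : a <= pi by rewrite -(ler_pM2r n0R) a_n; nra.
  have a_ge : pi / 2 <= a by rewrite -(ler_pM2r n0R) a_n; nra.
  rewrite -[a](subrK pi) cosDpi oppr_le0; apply: cos_ge0_pihalf; lra.
have ucos0 : ucos R (Ordinal n0) = 1 by rewrite /ucos /= mulr0 cos0.
have := vmin_le (@ucos R n) (Ordinal half_lt).
rewrite /Vlow (bigD1 (Ordinal n0)) //= ucos0.
have : 0 <= \sum_(i < n | i != Ordinal n0) (ucos R i - vmin (@ucos R n)) ^+ 2.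
  by apply: sumr_ge0 => i _; apply: sqr_ge0.
by nra.
Qed.

End ModeEstimates.

Lemma window_cover (k B : nat) : (0 < B <= k)%N ->
  exists2 j, (k <= 2 * j * B)%N & (2 * j * B <= 3 * k)%N.
Proof.
move=> /andP[B0 Bk]; set s := (k %/ B)%N.
have s1 : (1 <= s)%N by rewrite divn_gt0.
have sBk : (s * B <= k)%N by apply: leq_divM.
have kB : (k < s.+1 * B)%N by rewrite ltn_ceil.
exists ((s + 2) %/ 2)%N.
  by apply: ltnW; apply: leq_trans kB _; rewrite leq_mul2r; apply/orP; right; lia.
apply: leq_trans (_ : 3 * s * B <= 3 * k)%N; last by rewrite -mulnA leq_mul2l sBk orbT.
by rewrite leq_mul2r; apply/orP; right; lia.
Qed.

Section RingQuantizedDynamics.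
Variables (R : realType) (n B Q : nat) (w : R).
Hypotheses (n_gt0 : (0 < n)%N) (B_gt0 : (0 < B)%N) (Q_gt0 : (0 < Q)%N) (w01 : 0 <= w <= 1).
Local Notation A := (ring_mx n B w).
Local Notation x0 := (fun i => round_down Q (@ucos R n i)).

Lemma qtraj_first_window (x : 'I_n -> R) k : on_grid Q x -> (k < B)%N -> qtraj Q A x k = x.
Proof.
move=> xg; elim: k => [|k IH] kB //.
apply: funext => i; rewrite /= IH ?(ltnW kB) //.
rewrite -[k]add0n -[0%N](mul0n B) ring_mx_idle_apply //.
by have [z ->] := xg i; rewrite round_down_intK.
Qed.

Lemma Vlow_qtraj_nonincreasing (x : 'I_n -> R) k t : on_grid Q x -> (k <= t)%N ->
  Vlow (qtraj Q A x t) <= Vlow (qtraj Q A x k).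
Proof.
move=> xg; elim: t => [|t IH]; first by rewrite leqn0 => /eqP ->.
rewrite leq_eqVlt => /orP[/eqP -> // | ]; rewrite ltnS => kt.
apply: le_trans (IH kt); rewrite [qtraj _ _ _ t.+1]/=.
under eq_fun do rewrite avg_mx_apply.
apply: Vlow_round_avg_le => //; last exact: qtraj_on_grid.
  by case: (window_weight_cases B w t) => ->; case/andP: w01 => ? ?; lra.
exact: (@cyc_step_inj n).
Qed.

Lemma Vlow_round_ucos_le : Vlow x0 <= Vlow (@ucos R n) + n%:R * 5 / Q%:R.
Proof.
have Q0 : 0 < Q%:R :> R by rewrite ltr0n.
have q_le1 : 1 / Q%:R <= 1 :> R by rewrite ler_pdivrMr // mul1r (ler_nat R 1 Q).
have x0_sandwich i : ucos R i - 1 / Q%:R <= x0 i <= ucos R i.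
  by rewrite round_down_le // andbT ltW // round_down_gt.
have q0 : 0 <= 1 / Q%:R :> R by rewrite divr_ge0.
have /andP[_ x0_le] := Vlow_sandwich n_gt0 q0 x0_sandwich (sub_vmin_le2 (@ucos_bound R n)).
suff : n%:R * (2 * 2 * (1 / Q%:R) + (1 / Q%:R) ^+ 2) <= n%:R * 5 / Q%:R :> R by lra.
rewrite -[_ * 5 / _]mulrA; apply: ler_wpM2l => //; rewrite expr2; nra.
Qed.

Lemma Vlow_qtraj_ucos_ge j :
  lam n w ^+ (2 * j) * Vlow (@ucos R n) - n%:R * 4 * (2 * j * B).+1%:R / Q%:R
  <= Vlow (qtraj Q A x0 (2 * j * B)).
Proof.
have A_ds k := ring_mx_ds n B k w01.
have := @qtraj_round_sandwich R Q Q_gt0 n A (@ucos R n) (fun k => (A_ds k).1)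
  (fun k => (A_ds k).2.1) (2 * j * B); rewrite ltraj_ucos // => qtraj_sandwich.
have /andP[lam0 lam1] : 0 <= lam n w ^+ j <= 1.
  by have /andP[? ?] := lam_ge0_le1 n w01; rewrite exprn_ge0 // exprn_ile1.
have mode_bound (i : 'I_n) : -1 <= lam n w ^+ j * ucos R i <= 1.
  by have /andP[? ?] := ucos_bound R i; apply/andP; split; nra.
have d0 : 0 <= (2 * j * B).+1%:R / Q%:R :> R by rewrite divr_ge0.
have /andP[+ _] := Vlow_sandwich n_gt0 d0 qtraj_sandwich (sub_vmin_le2 mode_bound).
rewrite (@VlowZ R n (@ucos R n)) // -exprM (mulnC j 2%N).
suff -> : n%:R * 4 * (2 * j * B).+1%:R / Q%:R
  = n%:R * (2 * 2 * ((2 * j * B).+1%:R / Q%:R)) :> R by [].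
by ring.
Qed.

Lemma Vlow_round_ucos_gt0 : (2 <= n)%N -> n%:R * 4 / Q%:R < 1 :> R -> 0 < Vlow x0.
Proof.
move=> n2 nQ; have := Vlow_qtraj_ucos_ge 0; rewrite muln0 mul0n expr0 mul1r /=.
by have := Vlow_ucos_ge1 R n2; lra.
Qed.

Lemma Vlow_qtraj_ge_window k : (B <= k)%N -> exists2 j, (2 * j * B <= 3 * k)%N &
  lam n w ^+ (2 * j) * Vlow (@ucos R n) - n%:R * 4 * (3 * k).+1%:R / Q%:R
  <= Vlow (qtraj Q A x0 k).
Proof.
move=> Bk; have [j kj jk] := window_cover (introT andP (conj B_gt0 Bk)).
exists j => //; have grid : on_grid Q x0 by move=> i; eexists.
apply: le_trans (Vlow_qtraj_nonincreasing grid kj); apply: le_trans (Vlow_qtraj_ucos_ge j).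
rewrite lerD2l lerN2 ler_pM2r ?invr_gt0 ?ltr0n // ler_pM2l ?mulr_gt0 ?ltr0n //.
by rewrite ler_nat ltnS.
Qed.

(* 12 T + 9 = 4 (3 T + 1) + 5 accounts for the rounding errors at time 2 j B <= 3 k < 3 T
   and at time 0. *)
Lemma Vlow_qtraj_ratio_gt k (eps r T : R) : (2 <= n)%N -> 0 <= eps -> k%:R < T ->
    n%:R * (12 * T + 9) < Q%:R * (r - eps) ->
    (forall j, (2 * j * B <= 3 * k)%N -> r <= lam n w ^+ (2 * j)) ->
  eps < Vlow (qtraj Q A x0 k) / Vlow x0.
Proof.
move=> n2 eps0 kT Q_large decay.
have r1 : r <= 1 by have := decay 0 (leq0n _); rewrite muln0 expr0.
have Q0 : 0 < Q%:R :> R by rewrite ltr0n.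
have slack : n%:R * (12 * T + 9) / Q%:R < r - eps.
  by rewrite ltr_pdivrMr // [_ * Q%:R]mulrC.
have slack4 : n%:R * 4 / Q%:R <= n%:R * (12 * T + 9) / Q%:R.
  by rewrite ler_pM2r ?invr_gt0 // ler_pM2l ?ltr0n //; have := ler0n R k; lra.
have slack4_gt0 : 0 < n%:R * 4 / Q%:R :> R by rewrite divr_gt0 ?pmulr_lgt0 ?ltr0n.
have Vu1 := Vlow_ucos_ge1 R n2.
have V0 : 0 < Vlow x0 by apply: Vlow_round_ucos_gt0 => //; lra.
have x0_le := Vlow_round_ucos_le.
rewrite ltr_pdivlMr //; have [kB | Bk] := ltnP k B.
  have grid : on_grid Q x0 by move=> i; eexists.
  by rewrite (qtraj_first_window grid kB) gtr_pMl //; lra.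
have [j jk Vk_ge] := Vlow_qtraj_ge_window Bk.
have decayVu : r * Vlow (@ucos R n) <= lam n w ^+ (2 * j) * Vlow (@ucos R n).
  by rewrite ler_wpM2r ?decay //; lra.
have rounding : n%:R * 4 * (3 * k).+1%:R / Q%:R <= n%:R * 4 * (3 * T + 1) / Q%:R.
  rewrite ler_pM2r ?invr_gt0 // ler_pM2l ?mulr_gt0 ?ltr0n // -addn1 natrD natrM; lra.
have x0_scaled : eps * Vlow x0 <= eps * Vlow (@ucos R n) + n%:R * 5 / Q%:R.
  have : eps * (n%:R * 5 / Q%:R) <= n%:R * 5 / Q%:R.
    by rewrite ger_pMl; [lra | apply: divr_gt0 => //; rewrite pmulr_lgt0 ?ltr0n].
  by have := ler_wpM2l eps0 x0_le; lra.
have : (r - eps) * 1 <= (r - eps) * Vlow (@ucos R n) by apply: ler_wpM2l; lra.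
lra.
Qed.

End RingQuantizedDynamics.

Section DecayHorizon.
Variables (R : realType) (n B : nat) (w L : R).
Hypotheses (n_ge16 : (16 <= n)%N) (B_gt0 : (0 < B)%N) (w01 : 0 < w <= 1).

Local Notation T := (1 / 1536 * (n%:R ^+ 2 / w) * B%:R * L).

Lemma expR_half_le_lam_pow (k j : nat) : (2 * j * B <= 3 * k)%N -> k%:R < T ->
  expR (- (L / 2)) <= lam n w ^+ (2 * j).
Proof.
move=> jk kT; have w01' : 0 <= w <= 1 by case/andP: w01 => ? ?; apply/andP; split; lra.
apply: le_trans (expR_le_lam_pow _ n_ge16 w01'); rewrite ler_expR lerN2.
have n0 : 0 < n%:R ^+ 2 :> R by rewrite exprn_gt0 // ltr0n; apply: leq_trans n_ge16.
have B0 : 1 <= B%:R :> R by rewrite (ler_nat R 1 B).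
have jkR : (2 * j)%:R * B%:R <= 3 * k%:R :> R by rewrite -natrM -(natrM R 3 k) ler_nat.
case/andP: w01 => w0 _; set a := 256 * w / n%:R ^+ 2.
have a0 : 0 <= a by rewrite divr_ge0 // ?ltW //; lra.
have aT : a * 3 * T = B%:R * (L / 2).
  by rewrite /a; field; rewrite gt_eqF //= pnatr_eq0 -lt0n; apply: leq_trans n_ge16.
have jT : (2 * j)%:R * B%:R <= 3 * T by lra.
rewrite -(ler_pM2r (lt_le_trans ltr01 B0)).
by have := ler_wpM2l a0 jT; lra.
Qed.

End DecayHorizon.

Lemma expR_half_ln_inv_gt (R : realType) (eps : R) : 0 < eps < 1 ->
  eps < expR (- (ln (1 / eps) / 2)).
Proof.
move=> /andP[eps0 eps1]; rewrite div1r lnV ?posrE // mulNr opprK -[X in X < _]lnK ?posrE //.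
by rewrite ltr_expR; have := ln_lt0 (introT andP (conj eps0 eps1)); lra.
Qed.

Theorem proposition6 (R : realType) :
  exists (c : R) (n0 : nat), 0 < c /\
  forall (B : nat) (eta eps : R) (n : nat),
    (1 <= B)%N -> 0 < eta < 1 / 2 -> 0 < eps < 1 -> (n0 <= n)%N ->
    exists (A : nat -> 'M[R]_n) (Q : nat) (x0 : 'I_n -> R),
      (0 < Q)%N /\
      (forall i, exists z : int, x0 i = z%:~R / Q%:R) /\
      (forall k, doubly_stochastic (A k) /\
                 (forall i, 0 < A k i i) /\
                 (forall i j, 0 < A k i j -> eta <= A k i j)) /\
      (forall k, strongly_connected (union_edges A (k * B) B)) /\
      (forall k, Vlow (qtraj Q A x0 k) / Vlow x0 <= eps ->
                 c * (n%:R ^+ 2 / eta) * B%:R * ln (1 / eps) <= k%:R).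
Proof.
exists (1 / 1536), 16%N; split; first lra.
move=> B eta eps n B1 /andP[eta0 eta_half] eps01 n16.
have eta01 : 0 < eta <= 1 by rewrite eta0 /=; lra.
have eta01' : 0 <= eta <= 1 by apply/andP; split; lra.
set L := ln (1 / eps); set T := 1 / 1536 * (n%:R ^+ 2 / eta) * B%:R * L.
set r := expR (- (L / 2)); have eps_r : eps < r := expR_half_ln_inv_gt eps01.
set Q := (Num.truncn (n%:R * (12 * T + 9) / (r - eps))).+1.
exists (ring_mx n B eta), Q, (fun i => round_down Q (ucos R i)).
do 2 (split; first by [|eexists]).
split; last split.
- move=> k; split; first exact: ring_mx_ds.
  split=> [i | i j]; first by apply: ring_mx_diag_gt0; lra.
  by apply: ring_mx_gt0_ge; lra.
- by move=> k; apply: ring_mx_connected.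
- move=> k; apply: contraTT; rewrite -!ltNge => kT.
  have n0 : (0 < n)%N by apply: leq_trans n16.
  apply: (@Vlow_qtraj_ratio_gt R n B Q eta n0 B1 (ltn0Sn _) eta01' k eps r T) => //.
  + exact: leq_trans n16.
  + by case/andP: eps01 => /ltW.
  + by rewrite -ltr_pdivrMr ?subr_gt0 //; exact: truncnS_gt.
  + by move=> j jk; apply: (expR_half_le_lam_pow n16 B1 eta01 jk kT).
Qed.
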